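(* Let $r$ be a prime power and $q=r^2$. Then there exists a Hermitian self-orthogonal linear code over $\mathbb{F}_q$ with parameters $[2(q+1),\,2\lfloor r/2\rfloor-1,\,d]_q$ where $d\ge q-\lfloor r/2\rfloor+3$.
   Context: For $a\in\mathbb{F}_q$, $\overline{a}:=a^r$. The Hermitian inner product on $\mathbb{F}_q^n$ is $\langle u,v\rangle_H=\sum_i u_i\overline{v_i}$; a linear code $C$ is Hermitian self-orthogonal if $C\subseteq C^{\perp_H}$. A code with parameters $[n,k,d]_q$ is a linear code of length $n$, dimension $k$ and minimum Hamming weight $d$ over $\mathbb{F}_q$. *)

From HB Require Import structures.
From mathcomp Require Import all_boot all_order all_algebra all_field.
Set Implicit Arguments. Unset Strict Implicit. Unset Printing Implicit Defensive.
Import GRing.Theory.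
Local Open Scope ring_scope.

Definition hwt (F : finFieldType) (n : nat) (c : 'rV[F]_n) : nat :=
  #|[set i : 'I_n | c 0 i != 0]|.

Definition herm_ip (F : finFieldType) (r n : nat) (u v : 'rV[F]_n) : F :=
  \sum_(i < n) u 0 i * (v 0 i) ^+ r.

Definition herm_self_orth (F : finFieldType) (r n : nat)
    (C : {vspace 'rV[F]_n}) : Prop :=
  forall u v, u \in C -> v \in C -> herm_ip r u v = 0.

Definition min_dist (F : finFieldType) (n : nat)
    (C : {vspace 'rV[F]_n}) (d : nat) : Prop :=
  (exists c, [/\ c \in C, c != 0 & hwt c = d]) /\
  (forall c, c \in C -> c != 0 -> (d <= hwt c)%N).

Definition prime_power (r : nat) : Prop :=
  exists p m : nat, [/\ prime p, (0 < m)%N & r = (p ^ m)%N].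

From HB Require Import structures.
From mathcomp Require Import all_boot all_algebra all_field all_solvable zify.
Set Implicit Arguments. Unset Strict Implicit. Unset Printing Implicit Defensive.
Import GRing.Theory.
Local Open Scope ring_scope.

(* The code is a doubled Reed-Solomon code. Polynomials of degree < k are
   evaluated at every point of F twice, once with multiplier 1 and once with a
   multiplier a such that a^(r+1) = -1 (for odd r such an a exists because
   2(r+1) divides q - 1; in characteristic 2 take a = 1), and two zero
   coordinates pad the length to 2(q+1). In the Hermitian product of the
   codewords of f and g the two copies of a point y contribute
   f(y) g(y)^r (1 + a^(r+1)) = 0. A nonzero polynomial of degree < k has at
   most k - 1 roots, so a nonzero codeword has weight at least 2(q - k + 1),
   which for k = 2 floor(r/2) - 1 is at least q - floor(r/2) + 3 and makes
   the encoding injective. *)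

Lemma finField_prim_root (F : finFieldType) :
  exists z : F, (#|F|.-1).-primitive_root z.
Proof.
have n_gt0 : (0 < #|F|.-1)%N by rewrite ltn_predRL finNzRing_gt1.
pose nz := enum (predC1 (0 : F)).
have /hasP[z _ prim_z] : has (#|F|.-1).-primitive_root nz; last by exists z.
apply: has_prim_root => //; last 2 first.
- exact: enum_uniq.
- by rewrite -cardE cardC1.
apply/allP => x; rewrite mem_enum /= => x_neq0; rewrite unity_rootE.
apply/eqP/(mulIf x_neq0); rewrite mul1r -exprSr prednK ?expf_card //.
exact: ltnW (finNzRing_gt1 F).
Qed.

Lemma exists_expf_eqN1 (F : finFieldType) (e : nat) :
  (e.*2 %| #|F|.-1)%N -> exists a : F, a ^+ e = -1.
Proof.
have [z prim_z] := finField_prim_root F.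
have n_gt0 : (0 < #|F|.-1)%N by rewrite ltn_predRL finNzRing_gt1.
case/dvdnP=> s def_n; exists (z ^+ s); rewrite -exprM.
have se_gt0 : (0 < s * e)%N by move: n_gt0; rewrite def_n; lia.
have z_se_neq1 : z ^+ (s * e) != 1.
  rewrite -(prim_order_dvd prim_z); apply/negP => /(dvdn_leq se_gt0).
  by rewrite def_n; lia.
have /eqP : (z ^+ (s * e)) ^+ 2 = 1.
  by rewrite -exprM -(prim_expr_order prim_z) def_n; congr (_ ^+ _); lia.
by rewrite sqrf_eq1 (negbTE z_se_neq1) => /eqP.
Qed.

Lemma prime_power_gt1 (r : nat) : prime_power r -> (1 < r)%N.
Proof.
by case=> p [m [p_pr m_gt0 ->]]; rewrite -[1%N](expn0 p) ltn_exp2l ?prime_gt1.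
Qed.

Lemma exists_expf_succ_eqN1 (r : nat) (F : finFieldType) :
  prime_power r -> #|F| = (r ^ 2)%N -> exists a : F, a ^+ r.+1 = -1.
Proof.
case=> p [m [p_pr _ def_r]] cardF.
have [p2 | p_odd] := even_prime p_pr.
  have charF2 : 2 \in [pchar F].
    apply: (@card_finPcharP F 2 (m * 2)) => //.
    by rewrite cardF def_r -p2 expnM.
  by exists 1; rewrite expr1n oppr_pchar2.
apply: exists_expf_eqN1; rewrite cardF.
have r_odd : odd r by rewrite def_r oddX p_odd orbT.
have [t ->] : exists t, r = t.*2.+1.
  by exists r./2; rewrite -[LHS]odd_double_half r_odd.
by apply/dvdnP; exists t; nia.
Qed.

Lemma hwt_eq0 (F : finFieldType) (n : nat) (c : 'rV[F]_n) :
  (hwt c == 0%N) = (c == 0).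
Proof.
rewrite /hwt cards_eq0; apply/eqP/eqP => [/setP c0 | ->].
  by apply/rowP => i; have := c0 i; rewrite !inE mxE => /negbFE/eqP.
by apply/setP => i; rewrite !inE mxE eqxx.
Qed.

Lemma exists_min_dist (F : finFieldType) (n : nat) (C : {vspace 'rV[F]_n}) :
  C != 0%VS -> exists d, min_dist C d.
Proof.
rewrite -vpick0 => pick_neq0.
pose P c := (c \in C) && (c != 0).
have : P (vpick C) by rewrite /P memv_pick.
case/(arg_minnP (@hwt F n)) => c /andP[cC c_neq0] min_c.
exists (hwt c); split; first by exists c.
by move=> c' c'C c'_neq0; apply: min_c; apply/andP.
Qed.

Lemma card_roots_lt (F : finFieldType) (p : {poly F}) :
  p != 0 -> (#|[set y | root p y]| < size p)%N.
Proof.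
move=> p_neq0; rewrite cardE; apply: max_poly_roots (enum_uniq _) => //.
by apply/allP => y; rewrite mem_enum inE.
Qed.

Lemma card_fibers_const (T U : finType) (f : T -> U) (P : pred T)
    (B : {pred U}) (m : nat) :
  (forall y, #|[set t | P t && (f t == y)]| = m) ->
  #|[set t | P t && (f t \in B)]| = (m * #|B|)%N.
Proof.
move=> fiber_m.
transitivity (\sum_(y in B) #|[set t | P t && (f t == y)]|)%N; last first.
  by rewrite (eq_bigr _ (fun y _ => fiber_m y)) sum_nat_const mulnC.
rewrite -sum1_card (partition_big f (fun y => y \in B)) => [|t]; last first.
  by rewrite inE => /andP[].
apply: eq_bigr => y yB; rewrite -sum1_card; apply: eq_bigl => t.
by rewrite !inE -andbA; case: eqP => [->|]; rewrite ?andbF ?yB.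
Qed.

Section EvaluationCode.

Variables (F : finFieldType) (T : finType) (n k : nat).
Variables (pos : 'I_n -> T) (x w : T -> F).

Definition eval_mx : 'M[F]_(k, n) :=
  \matrix_(i < k, j < n) (w (pos j) * x (pos j) ^+ i).

Definition eval_code : {vspace 'rV[F]_n} := limg (linfun (mulmxr eval_mx)).

Lemma eval_codeP c : reflect (exists v, c = v *m eval_mx) (c \in eval_code).
Proof.
apply: (iffP memv_imgP) => [[v _ ->] | [v ->]]; exists v; rewrite ?lfunE //.
exact: memvf.
Qed.

Lemma eval_mxE v j : (v *m eval_mx) 0 j = w (pos j) * (rVpoly v).[x (pos j)].
Proof.
rewrite mxE horner_poly mulr_sumr; apply: eq_bigr => i _.
by rewrite valK mxE mulrCA.
Qed.

Hypothesis pos_bij : bijective pos.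

Lemma eval_code_herm_self_orth r :
  (forall y, \sum_(t | x t == y) w t ^+ r.+1 = 0) -> herm_self_orth r eval_code.
Proof.
move=> fiber_sum0 _ _ /eval_codeP[u ->] /eval_codeP[v ->].
pose f y := (rVpoly u).[y] * (rVpoly v).[y] ^+ r.
transitivity (\sum_t w t ^+ r.+1 * f (x t)).
  rewrite (reindex pos) /=; last exact: onW_bij.
  by apply: eq_bigr => j _; rewrite !eval_mxE exprMn exprS mulrACA.
rewrite (partition_big x xpredT) //=; apply: big1 => y _.
transitivity (f y * \sum_(t | x t == y) w t ^+ r.+1).
  by rewrite mulr_sumr; apply: eq_bigr => t /eqP ->; rewrite mulrC.
by rewrite fiber_sum0 mulr0.
Qed.

Lemma hwt_eval_mx m v :
  (forall y, #|[set t | (w t != 0) && (x t == y)]| = m) -> v != 0 ->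
  (m * (#|F| - k.-1) <= hwt (v *m eval_mx))%N.
Proof.
move=> fiber_m v_neq0; set p := rVpoly v.
have p_neq0 : p != 0.
  by apply: contra_neq v_neq0 => p0; rewrite -[v]rVpolyK -/p p0 linear0.
have roots_le : (#|[set y | root p y]| <= k.-1)%N.
  rewrite -ltnS (leq_trans (card_roots_lt p_neq0)) //.
  exact: leq_trans (size_poly _ _) (leqSpred k).
pose S := [set t | (w t != 0) && (x t \in ~: [set y | root p y])].
have cardS : #|S| = (m * (#|F| - #|[set y | root p y]|))%N.
  by rewrite (card_fibers_const _ fiber_m) [in LHS]cardsCs setCK.
have : pos @^-1: S \subset [set j | (v *m eval_mx) 0 j != 0].
  apply/subsetP => j; rewrite !inE eval_mxE => /andP[w_neq0 not_root].
  by rewrite mulf_neq0.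
move/subset_leq_card; rewrite on_card_preimset ?cardS; last exact: onW_bij.
apply: leq_trans; rewrite leq_mul2l leq_sub2l ?orbT //.
Qed.

Lemma dim_eval_code m :
  (forall y, #|[set t | (w t != 0) && (x t == y)]| = m) -> (0 < m)%N ->
  (k <= #|F|)%N -> \dim eval_code = k.
Proof.
move=> fiber_m m_gt0 k_le.
rewrite limg_dim_eq ?dimvf /dim /= ?mul1n // capfv; apply/eqP/lker0P => u v.
rewrite !lfunE /= => /eqP; rewrite -subr_eq0 -mulmxBl -hwt_eq0 => uv_wt0.
apply/eqP; rewrite -subr_eq0; apply: contraLR uv_wt0 => uv_neq0.
rewrite -lt0n (leq_trans _ (hwt_eval_mx fiber_m uv_neq0)) // muln_gt0 m_gt0 /=.
by rewrite subn_gt0; case: k k_le => // _; apply: ltnW (finNzRing_gt1 F).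
Qed.

End EvaluationCode.

Section DoubledLayout.

Variables (F : finFieldType) (a : F).

(* Coordinate (b, Some y) evaluates at y with multiplier a if b, 1 otherwise;
   the coordinates (b, None) are the two padding zeros. *)

Definition doubled_point (t : bool * option F) : F := odflt 0 t.2.

Definition doubled_weight (t : bool * option F) : F :=
  if t.2 is Some _ then (if t.1 then a else 1) else 0.

Lemma doubled_weight_fiber_sum r : a ^+ r.+1 = -1 ->
  forall y, \sum_(t | doubled_point t == y) doubled_weight t ^+ r.+1 = 0.
Proof.
move=> a_norm y; rewrite (bigD1 (false, Some y)) ?eqxx //.
rewrite (bigD1 (true, Some y)) ?eqxx //= big1 => [|[b [z|]] /=]; last first.
- by rewrite expr0n.
- by case: b; rewrite /doubled_point /= !andbT => /andP[/eqP->]; rewrite eqxx.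
by rewrite /doubled_weight /= expr1n a_norm addr0 subrr.
Qed.

Lemma card_doubled_fiber : a != 0 -> forall y,
  #|[set t | (doubled_weight t != 0) && (doubled_point t == y)]| = 2%N.
Proof.
move=> a_neq0 y.
suff -> : [set t | (doubled_weight t != 0) && (doubled_point t == y)] =
          [set (false, Some y); (true, Some y)] by rewrite cards2.
apply/setP => -[b [z|]];
  rewrite !inE /doubled_weight /doubled_point /= !xpair_eqE /=.
  by case: b; rewrite /= ?a_neq0 ?oner_neq0 ?orbF.
by rewrite eqxx; case: b.
Qed.

End DoubledLayout.

Theorem corollary5p1 (r : nat) (hr : prime_power r)
    (F : finFieldType) (hF : #|F| = (r ^ 2)%N) :
  exists (C : {vspace 'rV[F]_(2 * (r ^ 2 + 1))}) (d : nat),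
    [/\ herm_self_orth r C,
        \dim C = (2 * r./2 - 1)%N,
        min_dist C d
      & (r ^ 2 - r./2 + 3 <= d)%N].
Proof.
have r_gt1 := prime_power_gt1 hr.
have [a a_norm] := exists_expf_succ_eqN1 hr hF.
have a_neq0 : a != 0.
  by apply: contra_eq_neq a_norm => ->; rewrite expr0n eq_sym oppr_eq0 oner_eq0.
have cardT : (2 * (r ^ 2 + 1))%N = #|{: bool * option F}|.
  by rewrite card_prod card_bool card_option hF addn1.
pose pos := enum_val \o cast_ord cardT.
have pos_bij : bijective pos.
  by apply: bij_comp (enum_val_bij _) _; exists (cast_ord (esym cardT));
    [exact: cast_ordK | exact: cast_ordKV].
set k := (2 * r./2 - 1)%N.
pose C := eval_code k pos (@doubled_point F) (doubled_weight a).
have k_le : (k <= #|F|)%N by rewrite hF /k; nia.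
have dimC : \dim C = k.
  exact: (dim_eval_code pos_bij (card_doubled_fiber a_neq0) (k := k)).
have wtC c : c \in C -> c != 0 -> (r ^ 2 - r./2 + 3 <= hwt c)%N.
  case/eval_codeP => v -> vG_neq0.
  have v_neq0 : v != 0 by apply: contra_neq vG_neq0 => ->; rewrite mul0mx.
  apply: leq_trans (hwt_eval_mx pos_bij (card_doubled_fiber a_neq0) v_neq0).
  by rewrite hF /k; nia.
have [d dC] : exists d, min_dist C d.
  by apply: exists_min_dist; rewrite -dimv_eq0 dimC /k; lia.
exists C, d; split => //.
- exact/eval_code_herm_self_orth/doubled_weight_fiber_sum.
- by case: dC => -[c [cC c_neq0 <-]] _; exact: wtC cC c_neq0.
Qed.
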